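(* Let us denote by $x_c(x)$ the abscissa of the first collision point of the trajectory starting from $x \in \Sigma$ with the upper boundary of $\hat{D}$. For all $x \in \Sigma$ such that $\alpha(x_c(x))$ is defined, we have \begin{displaymath} f'(x) = \frac{\sin(\theta + \alpha(x_c(x)))}{\sin(\theta-\alpha(x_c(x)))} . \end{displaymath}
   Context: Setting: an internal-wave billiard (a point particle moving at unit speed in a planar table, reflected so that the angles of incident and reflected velocities with the vertical are equal) in a table $D$ of height $1/2$ with horizontal bases, a vertical left side, and right side the graph of a piecewise $C^1$, strictly decreasing, concave function (possibly plus a vertical segment attached to its lower end). The dynamics is unfolded to a linear flow of unit speed and fixed direction $\theta$ (angle with the vertical) on $\hat{D}\subset\mathbb{R}^2$, a 4-fold copy of $D$, whose upper boundary is the graph of an even function $b:[-1/2,1/2]\to\mathbb{R}^+$ that is piecewise $C^1$, concave, and non-increasing on $[0,1/2]$, the lower boundary being its mirror image; opposite boundary points (same abscissa on upper/lower boundary, same ordinate on left/right boundary) are identified. Set $\alpha(x):=\arctan(b'(x))$ (defined except at countably many points), with $\alpha(-1/2)=\alpha_M$, $\alpha(1/2)=-\alpha_M$. The direction satisfies $\theta\in(\alpha_M,\pi/2)$. $\Sigma$ is a horizontal segment of length $1$ spanning $\hat D$ (a cross-section, topologically a circle after the identifications), and $f:\Sigma\to\Sigma$ is the first-return (Poincaré) map of the linear flow; between consecutive returns a trajectory hits the upper boundary once and continues from the opposite point of the lower boundary. *)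

From Stdlib Require Import Reals ZArith ClassicalEpsilon.
From Coquelicot Require Import Coquelicot.
Open Scope R_scope.

Definition cont_on (g : R -> R) (a c : R) : Prop :=
  forall x, a <= x <= c -> forall eps, 0 < eps ->
    exists delta, 0 < delta /\
      forall y, a <= y <= c -> Rabs (y - x) < delta -> Rabs (g y - g x) < eps.

Definition piecewise_C1 (g : R -> R) (a c : R) : Prop :=
  exists (n : nat) (t : nat -> R),
    t O = a /\ t n = c /\ (forall i, (i < n)%nat -> t i < t (S i)) /\
    cont_on g a c /\
    forall i, (i < n)%nat -> exists g' : R -> R,
      cont_on g' (t i) (t (S i)) /\
      forall y, t i < y < t (S i) -> is_derive g y (g' y).

Definition concave_on (g : R -> R) (a c : R) : Prop :=
  forall x y l, a <= x <= c -> a <= y <= c -> 0 <= l <= 1 ->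
    l * g x + (1 - l) * g y <= g (l * x + (1 - l) * y).

(* alpha(x) = arctan(b'(x)) (meaningful where b is differentiable). *)
Definition alpha (b : R -> R) (x : R) : R := atan (Derive b x).

(* Reduction of an abscissa of the universal cover to [-1/2, 1/2). *)
Definition red (X : R) : R := X - IZR (Int_part (X + 1/2)).

(* Unfolded flow: unit speed, direction (cos theta, sin theta); the cross
   section Sigma is the horizontal segment at height y0, abscissae in
   [-1/2,1/2] with the endpoints identified (we work on the universal cover).
   The trajectory starting from (x, y0) is at (x + t cos theta, y0 + t sin theta)
   (abscissa taken modulo 1). *)
Definition hits_upper (b : R -> R) (theta y0 x t : R) : Prop :=
  exists k : Z,
    -1/2 <= x + t * cos theta - IZR k <= 1/2 /\
    y0 + t * sin theta = b (x + t * cos theta - IZR k).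

Definition is_first_collision_time (b : R -> R) (theta y0 x t : R) : Prop :=
  0 < t /\ hits_upper b theta y0 x t /\
  forall s, 0 < s < t -> ~ hits_upper b theta y0 x s.

(* The first collision time (it exists and is unique under the standing
   hypotheses; otherwise the value is irrelevant). *)
Definition tcoll (b : R -> R) (theta y0 x : R) : R :=
  epsilon (inhabits 0) (is_first_collision_time b theta y0 x).

Definition x_c (b : R -> R) (theta y0 x : R) : R :=
  red (x + tcoll b theta y0 x * cos theta).

(* Lift of the first-return map f : Sigma -> Sigma.  After the collision at
   (X_c, b(x_c)) the trajectory continues from the opposite point
   (X_c, -b(x_c)) of the lower boundary and returns to height y0 after
   travelling the horizontal distance (y0 + b(x_c)) cot theta.
   f = (return_lift mod 1), and f' is the derivative of this lift. *)
Definition return_lift (b : R -> R) (theta y0 : R) (x : R) : R :=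
  x + tcoll b theta y0 x * cos theta
    + (y0 + b (x_c b theta y0 x)) * cos theta / sin theta.

(* Let T = tan theta and let B = b o red be the 1-periodic extension of b to the
   universal cover.  Concavity and evenness make B Lipschitz with constant
   d = b'(-1/2) < T.  The trajectory from x meets the graph of B at the abscissas X
   with y0 + (X - x) T = B X, i.e. where the launch point L X = X - (B X - y0) / T
   equals x.  As L is continuous and expanding at rate 1 - d/T > 0, there is
   exactly one such X: it is the first collision, and x |-> X is the inverse of L,
   so X'(x) = 1 / L'(X) = T / (T - b'(x_c)).  The return map lifts to
   x |-> 2 X - x + 2 y0 / T, whose derivative (T + b') / (T - b') is
   sin(theta + alpha) / sin(theta - alpha). *)

From Stdlib Require Import Reals Lra Lia ClassicalEpsilon.
From Coquelicot Require Import Coquelicot.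
Open Scope R_scope.

Definition slope (g : R -> R) (p q : R) : R := (g q - g p) / (q - p).

Section ConcaveSlopes.

Variables (g : R -> R) (a c : R).
Hypothesis hconc : concave_on g a c.

Lemma concave_chord p q r : a <= p -> p < q -> q < r -> r <= c ->
  (r - q) * g p + (q - p) * g r <= (r - p) * g q.
Proof.
  intros Hap Hpq Hqr Hrc.
  set (l := (r - q) / (r - p)).
  assert (Hl : 0 <= l <= 1).
  { unfold l. split.
    - apply Rdiv_le_0_compat; lra.
    - apply Rmult_le_reg_r with (r - p); [lra |].
      unfold Rdiv. rewrite Rmult_assoc, Rinv_l by lra. lra. }
  pose proof (hconc p r l ltac:(lra) ltac:(lra) Hl) as H.
  replace (l * p + (1 - l) * r) with q in H by (unfold l; field; lra).
  replace ((r - q) * g p + (q - p) * g r) with ((r - p) * (l * g p + (1 - l) * g r))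
    by (unfold l; field; lra).
  apply Rmult_le_compat_l; lra.
Qed.

Lemma concave_slope_left p q r : a <= p -> p < q -> q < r -> r <= c ->
  slope g p r <= slope g p q.
Proof.
  intros Hap Hpq Hqr Hrc. pose proof (concave_chord p q r Hap Hpq Hqr Hrc).
  unfold slope. apply Rle_div_l; [lra |].
  replace ((g q - g p) / (q - p) * (r - p)) with ((r - p) * (g q - g p) / (q - p))
    by (field; lra).
  apply Rle_div_r; [lra |]. nra.
Qed.

Lemma concave_slope_right p q r : a <= p -> p < q -> q < r -> r <= c ->
  slope g q r <= slope g p r.
Proof.
  intros Hap Hpq Hqr Hrc. pose proof (concave_chord p q r Hap Hpq Hqr Hrc).
  unfold slope. apply Rle_div_l; [lra |].
  replace ((g r - g p) / (r - p) * (r - q)) with ((r - q) * (g r - g p) / (r - p))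
    by (field; lra).
  apply Rle_div_r; [lra |]. nra.
Qed.

Variable d : R.
Hypothesis hd : filterlim (fun h => (g (a + h) - g a) / h) (at_right 0) (locally d).

Lemma concave_slope_le_right_deriv u v : a <= u -> u < v -> v <= c -> slope g u v <= d.
Proof.
  intros Hau Huv Hvc.
  assert (Huv_av : slope g u v <= slope g a v).
  { destruct (Req_dec u a) as [-> | Hua]; [lra |].
    apply concave_slope_right; lra. }
  apply Rle_trans with (slope g a v); [exact Huv_av |].
  apply (closed_filterlim_loc _ (fun y => slope g a v <= y) d hd); [| apply closed_ge].
  exists (mkposreal (v - a) ltac:(lra)). simpl. intros h Hh Hpos.
  change (Rabs (h - 0) < v - a) in Hh. rewrite Rminus_0_r, Rabs_pos_eq in Hh by lra.
  replace ((g (a + h) - g a) / h) with (slope g a (a + h)) by (unfold slope; f_equal; ring).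
  apply concave_slope_left; lra.
Qed.

End ConcaveSlopes.

Definition periodize (b : R -> R) (X : R) : R := b (red X).

Lemma red_bounds X : -1/2 <= red X < 1/2.
Proof. unfold red. pose proof (base_Int_part (X + 1/2)). lra. Qed.

Lemma red_eq_shift X k : -1/2 <= X - IZR k < 1/2 -> red X = X - IZR k.
Proof.
  intros Hk. unfold red. do 2 f_equal. unfold Int_part.
  enough (up (X + 1/2) = (k + 1)%Z) by lia.
  symmetry. apply tech_up; rewrite plus_IZR; simpl; lra.
Qed.

Lemma is_derive_periodize (b : R -> R) X l :
  -1/2 < red X -> is_derive b (red X) l -> is_derive (periodize b) X l.
Proof.
  intros Hred Hb.
  pose proof (red_bounds X) as Hbd.
  set (k := Int_part (X + 1/2)).
  assert (HX : red X = X - IZR k) by reflexivity.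
  set (rho := Rmin (red X + 1/2) (1/2 - red X)).
  assert (Hrho : 0 < rho) by (apply Rmin_pos; lra).
  apply is_derive_ext_loc with (fun Y => b (Y - IZR k)).
  - exists (mkposreal _ Hrho). intros Y HY. change (Rabs (Y - X) < rho) in HY.
    assert (rho <= red X + 1/2) by apply Rmin_l.
    assert (rho <= 1/2 - red X) by apply Rmin_r.
    apply Rabs_def2 in HY.
    unfold periodize. rewrite (red_eq_shift Y k) by lra. reflexivity.
  - rewrite HX in Hb.
    assert (Hshift : is_derive (fun Y => Y - IZR k) X 1) by (auto_derive; [trivial | ring]).
    pose proof (is_derive_comp b _ X l 1 Hb Hshift) as H.
    change (scal 1 l) with (1 * l) in H. rewrite Rmult_1_l in H.
    exact H.
Qed.

Section Periodization.

Variables (b : R -> R) (d : R).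
Hypotheses
  (hconc : concave_on b (-1/2) (1/2))
  (heven : forall x, -1/2 <= x <= 1/2 -> b (- x) = b x)
  (hnoninc : forall x y, 0 <= x -> x <= y -> y <= 1/2 -> b y <= b x)
  (hd : filterlim (fun h => (b (-1/2 + h) - b (-1/2)) / h) (at_right 0) (locally d)).

Lemma b_ge_half z : -1/2 <= z <= 1/2 -> b (1/2) <= b z.
Proof.
  intros Hz. destruct (Rle_or_lt 0 z).
  - apply hnoninc; lra.
  - rewrite <- (heven z) by lra. apply hnoninc; lra.
Qed.

Lemma b_neg_half : b (-1/2) = b (1/2).
Proof.
  rewrite <- (heven (1/2)) by lra. f_equal. field.
Qed.

Lemma b_sub_le u v : -1/2 <= u <= v -> v <= 1/2 -> b v - b u <= d * (v - u).
Proof.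
  intros Huv Hv. destruct (Req_dec u v) as [-> | Hne]; [lra |].
  pose proof (concave_slope_le_right_deriv b _ _ hconc d hd u v ltac:(lra) ltac:(lra) Hv) as H.
  unfold slope in H. apply Rle_div_l in H; lra.
Qed.

Lemma right_deriv_nonneg : 0 <= d.
Proof.
  pose proof (b_sub_le (-1/2) (1/2) ltac:(lra) ltac:(lra)).
  rewrite b_neg_half in H. lra.
Qed.

Lemma periodize_shift X k : -1/2 <= X - IZR k <= 1/2 -> b (X - IZR k) = periodize b X.
Proof.
  intros Hk. unfold periodize. destruct (Req_dec (X - IZR k) (1/2)) as [E | Hne].
  - rewrite (red_eq_shift X (k + 1)) by (rewrite plus_IZR; simpl; lra).
    rewrite plus_IZR, E. simpl. replace (X - (IZR k + 1)) with (-1/2) by lra.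
    symmetry. exact b_neg_half.
  - rewrite (red_eq_shift X k) by lra. reflexivity.
Qed.

Lemma periodize_opp X : periodize b (- X) = periodize b X.
Proof.
  pose proof (red_bounds X) as Hbd.
  set (k := Int_part (X + 1/2)).
  assert (HX : red X = X - IZR k) by reflexivity.
  rewrite <- (periodize_shift (- X) (- k)) by (rewrite opp_IZR; lra).
  rewrite opp_IZR. replace (- X - - IZR k) with (- red X) by lra.
  apply heven. lra.
Qed.

Lemma periodize_sub_le X Y : X <= Y -> periodize b Y - periodize b X <= d * (Y - X).
Proof.
  intros HXY.
  pose proof (base_Int_part (X + 1/2)). pose proof (base_Int_part (Y + 1/2)).
  pose proof (red_bounds X). pose proof (red_bounds Y).
  unfold periodize, red in *.
  set (kX := Int_part (X + 1/2)) in *. set (kY := Int_part (Y + 1/2)) in *.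
  destruct (Z.eq_dec kX kY) as [E | Hne].
  - rewrite E in *. replace (Y - X) with (Y - IZR kY - (X - IZR kY)) by ring.
    apply b_sub_le; lra.
  - (* B X >= b(1/2) = b(-1/2), and the cell of Y starts to the right of X. *)
    assert (HkXY : (kX + 1 <= kY)%Z).
    { enough (kX < kY + 1)%Z by lia. apply lt_IZR. rewrite plus_IZR. simpl. lra. }
    apply IZR_le in HkXY. rewrite plus_IZR in HkXY. simpl in HkXY.
    pose proof (b_ge_half (X - IZR kX) ltac:(lra)).
    pose proof (b_sub_le (-1/2) (Y - IZR kY) ltac:(lra) ltac:(lra)).
    pose proof right_deriv_nonneg.
    rewrite b_neg_half in *.
    assert (d * (Y - IZR kY - -1/2) <= d * (Y - X)) by (apply Rmult_le_compat_l; lra).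
    lra.
Qed.

Lemma periodize_lipschitz X Y : Rabs (periodize b Y - periodize b X) <= d * Rabs (Y - X).
Proof.
  destruct (Rle_or_lt X Y) as [HXY | HYX].
  - pose proof (periodize_sub_le X Y HXY).
    pose proof (periodize_sub_le (- Y) (- X) ltac:(lra)).
    rewrite !periodize_opp in *.
    rewrite (Rabs_pos_eq (Y - X)) by lra. apply Rabs_le. lra.
  - pose proof (periodize_sub_le Y X ltac:(lra)).
    pose proof (periodize_sub_le (- X) (- Y) ltac:(lra)).
    rewrite !periodize_opp in *.
    rewrite (Rabs_left (Y - X)) by lra. apply Rabs_le. lra.
Qed.

End Periodization.

Definition expanding (c : R) (phi : R -> R) : Prop :=
  forall y z, y <= z -> c * (z - y) <= phi z - phi y.

Section ExpandingMaps.

Variables (c : R) (phi : R -> R).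
Hypotheses (hc : 0 < c) (hphi : expanding c phi).

Lemma expanding_abs y z : c * Rabs (z - y) <= Rabs (phi z - phi y).
Proof.
  destruct (Rle_or_lt y z) as [Hyz | Hzy].
  - pose proof (hphi y z Hyz).
    rewrite !Rabs_pos_eq by nra. lra.
  - pose proof (hphi z y (Rlt_le _ _ Hzy)).
    rewrite !Rabs_left1 by nra. lra.
Qed.

Lemma expanding_inj y z : phi y = phi z -> y = z.
Proof.
  intros E. pose proof (expanding_abs y z) as H.
  rewrite E, Rminus_diag, Rabs_R0 in H.
  pose proof (Rabs_pos (z - y)).
  assert (Hzy : Rabs (z - y) = 0) by nra.
  apply Rabs_eq_0 in Hzy. lra.
Qed.

Lemma expanding_preimage y u :
  continuity phi -> phi y <= u -> exists z, y <= z /\ phi z = u.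
Proof.
  intros Hcont Hyu.
  set (M := (u - phi y) / c).
  assert (HM : 0 <= M) by (apply Rdiv_le_0_compat; lra).
  assert (Hphi : u <= phi (y + M)).
  { pose proof (hphi y (y + M) ltac:(lra)).
    replace (c * (y + M - y)) with (u - phi y) in H by (unfold M; field; lra).
    lra. }
  destruct (IVT_cor (fun z => phi z - u) y (y + M)) as [z [Hz Ez]].
  - apply continuity_minus; [exact Hcont | apply continuity_const; now intros ? ?].
  - lra.
  - apply Rmult_le_0_r; lra.
  - exists z. split; lra.
Qed.

Lemma expanding_deriv_ge y l : is_derive phi y l -> c <= l.
Proof.
  intros Hd. apply is_derive_Reals in Hd.
  apply Rnot_lt_le. intros Hlt.
  destruct (Hd (c - l) ltac:(lra)) as [delta Hdelta].
  pose proof (cond_pos delta) as Hdel.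
  specialize (Hdelta (delta / 2) ltac:(lra)
    ltac:(rewrite Rabs_pos_eq by lra; lra)).
  assert (Hq : c <= (phi (y + delta / 2) - phi y) / (delta / 2)).
  { apply Rmult_le_reg_r with (delta / 2); [lra |].
    replace ((phi (y + delta / 2) - phi y) / (delta / 2) * (delta / 2))
      with (phi (y + delta / 2) - phi y) by (field; lra).
    pose proof (hphi y (y + delta / 2) ltac:(lra)). lra. }
  apply Rabs_def2 in Hdelta. lra.
Qed.

Lemma is_derive_expanding_inverse (psi : R -> R) u l :
  (forall v, phi (psi v) = v) -> is_derive phi (psi u) l -> is_derive psi u (/ l).
Proof.
  intros Hinv Hd.
  pose proof (expanding_deriv_ge _ _ Hd) as Hl.
  apply is_derive_Reals in Hd. apply is_derive_Reals.
  intros eps Heps.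
  destruct (Hd (eps * c * l)) as [delta Hdelta].
  { repeat apply Rmult_lt_0_compat; lra. }
  assert (Hcd : 0 < c * delta) by (apply Rmult_lt_0_compat; [lra | apply cond_pos]).
  exists (mkposreal _ Hcd). simpl. intros h Hh0 Hh.
  set (k := psi (u + h) - psi u).
  assert (Hhk : phi (psi u + k) - phi (psi u) = h).
  { unfold k. replace (psi u + (psi (u + h) - psi u)) with (psi (u + h)) by ring.
    rewrite !Hinv. ring. }
  assert (Hck : c * Rabs k <= Rabs h).
  { rewrite <- Hhk. pose proof (expanding_abs (psi u) (psi u + k)) as H.
    replace (psi u + k - psi u) with k in H by ring. exact H. }
  assert (Hk0 : k <> 0).
  { intros E. rewrite E, Rplus_0_r, Rminus_diag in Hhk. auto. }
  assert (Hhp : 0 < Rabs h) by (apply Rabs_pos_lt; exact Hh0).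
  assert (Hkd : Rabs k < delta).
  { apply Rmult_lt_reg_l with c; lra. }
  specialize (Hdelta k Hk0 Hkd). rewrite Hhk in Hdelta.
  replace (k / h - / l) with (- ((h / k - l) * k / (l * h))) by (field; lra).
  rewrite Rabs_Ropp. unfold Rdiv.
  rewrite !Rabs_mult, Rabs_inv, Rabs_mult, (Rabs_pos_eq l) by lra.
  apply Rmult_lt_reg_r with (l * Rabs h); [apply Rmult_lt_0_compat; lra |].
  rewrite Rmult_assoc, Rinv_l by (apply Rgt_not_eq, Rmult_lt_0_compat; lra).
  rewrite Rmult_1_r.
  assert (Rabs (h * / k - l) * Rabs k < eps * c * l * Rabs k)
    by (apply Rmult_lt_compat_r; [apply Rabs_pos_lt |]; assumption).
  assert (eps * l * (c * Rabs k) <= eps * l * Rabs h)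
    by (apply Rmult_le_compat_l; [apply Rmult_le_pos |]; lra).
  nra.
Qed.

End ExpandingMaps.

Lemma lipschitz_continuity (f : R -> R) (k : R) :
  (forall y z, Rabs (f z - f y) <= k * Rabs (z - y)) -> continuity f.
Proof.
  intros Hf y eps Heps.
  exists (eps / (Rabs k + 1)). split; [apply Rdiv_lt_0_compat; pose proof (Rabs_pos k); lra |].
  intros z [_ Hz]. simpl in *. unfold R_dist in *.
  pose proof (Rabs_pos k). pose proof (Rabs_pos (z - y)). pose proof (Rle_abs k).
  pose proof (Hf y z).
  assert (Rabs (z - y) * (Rabs k + 1) < eps).
  { apply Rmult_lt_reg_r with (/ (Rabs k + 1)); [apply Rinv_0_lt_compat; lra |].
    rewrite Rmult_assoc, Rinv_r, Rmult_1_r by lra. exact Hz. }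
  nra.
Qed.

Definition launch_point (b : R -> R) (theta y0 X : R) : R :=
  X - (periodize b X - y0) / tan theta.

Definition collision_abscissa (b : R -> R) (theta y0 x : R) : R :=
  x + tcoll b theta y0 x * cos theta.

Section FirstCollision.

Variables (b : R -> R) (d theta y0 : R).
Hypotheses
  (hconc : concave_on b (-1/2) (1/2))
  (heven : forall x, -1/2 <= x <= 1/2 -> b (- x) = b x)
  (hnoninc : forall x y, 0 <= x -> x <= y -> y <= 1/2 -> b y <= b x)
  (hd : filterlim (fun h => (b (-1/2 + h) - b (-1/2)) / h) (at_right 0) (locally d))
  (htheta : atan d < theta < PI / 2)
  (hy0 : y0 < b (1/2)).

Lemma cos_theta_pos : 0 < cos theta.
Proof.
  pose proof (atan_bound d). apply cos_gt_0; lra.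
Qed.

Lemma tan_theta_gt : d < tan theta.
Proof.
  pose proof (atan_bound d). pose proof PI_RGT_0.
  rewrite <- (tan_atan d). apply tan_increasing; lra.
Qed.

Lemma tan_theta_pos : 0 < tan theta.
Proof.
  pose proof (right_deriv_nonneg b d hconc heven hd). pose proof tan_theta_gt. lra.
Qed.

Lemma sin_theta_pos : 0 < sin theta.
Proof.
  pose proof cos_theta_pos. pose proof tan_theta_pos.
  replace (sin theta) with (tan theta * cos theta) by (unfold tan; field; lra).
  apply Rmult_lt_0_compat; lra.
Qed.

Lemma launch_point_expanding : expanding (1 - d / tan theta) (launch_point b theta y0).
Proof.
  intros Y Z HYZ. pose proof tan_theta_pos as HT.
  pose proof (periodize_sub_le b d hconc heven hnoninc hd Y Z HYZ) as HB.
  unfold launch_point.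
  replace (Z - (periodize b Z - y0) / tan theta - (Y - (periodize b Y - y0) / tan theta))
    with ((Z - Y) - (periodize b Z - periodize b Y) / tan theta) by (field; lra).
  replace ((1 - d / tan theta) * (Z - Y)) with ((Z - Y) - d * (Z - Y) / tan theta)
    by (field; lra).
  apply Rplus_le_compat_l, Ropp_le_contravar, Rmult_le_compat_r; [| exact HB].
  left. apply Rinv_0_lt_compat. exact HT.
Qed.

Lemma launch_point_continuous : continuity (launch_point b theta y0).
Proof.
  apply (lipschitz_continuity _ (1 + d / tan theta)). intros Y Z.
  pose proof tan_theta_pos.
  pose proof (periodize_lipschitz b d hconc heven hnoninc hd Y Z).
  unfold launch_point.
  replace (Z - (periodize b Z - y0) / tan theta - (Y - (periodize b Y - y0) / tan theta))
    with ((Z - Y) - (periodize b Z - periodize b Y) / tan theta) by (field; lra).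
  eapply Rle_trans; [apply Rabs_triang |]. rewrite Rabs_Ropp.
  unfold Rdiv. rewrite Rabs_mult, (Rabs_pos_eq (/ tan theta))
    by (left; apply Rinv_0_lt_compat; lra).
  assert (Rabs (periodize b Z - periodize b Y) * / tan theta
          <= d * Rabs (Z - Y) * / tan theta)
    by (apply Rmult_le_compat_r; [left; apply Rinv_0_lt_compat |]; lra).
  lra.
Qed.

Lemma launch_point_eq_iff X x :
  launch_point b theta y0 X = x <-> periodize b X = y0 + (X - x) * tan theta.
Proof.
  pose proof tan_theta_pos. unfold launch_point. split; intros H'.
  - assert (Hq : (periodize b X - y0) / tan theta = X - x) by lra.
    rewrite <- Hq. field. lra.
  - rewrite H'. field. lra.
Qed.

Lemma hits_upper_iff x t :
  hits_upper b theta y0 x t <-> launch_point b theta y0 (x + t * cos theta) = x.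
Proof.
  pose proof cos_theta_pos. pose proof sin_theta_pos.
  rewrite launch_point_eq_iff. unfold tan.
  replace ((x + t * cos theta - x) * (sin theta / cos theta)) with (t * sin theta)
    by (field; lra).
  split.
  - intros [k [Hk Heq]]. rewrite <- (periodize_shift b heven _ k Hk). lra.
  - intros Heq. exists (Int_part (x + t * cos theta + 1/2)).
    pose proof (red_bounds (x + t * cos theta)) as Hbd. unfold red in Hbd.
    split; [lra |]. unfold periodize, red in Heq. lra.
Qed.

Lemma expansion_rate_pos : 0 < 1 - d / tan theta.
Proof.
  pose proof tan_theta_pos. pose proof tan_theta_gt.
  enough (d / tan theta < 1) by lra. apply Rlt_div_l; lra.
Qed.

Lemma first_collision_time_exists x : exists t, is_first_collision_time b theta y0 x t.
Proof.
  pose proof cos_theta_pos as Hcos.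
  assert (Hlaunch : launch_point b theta y0 x < x).
  { pose proof tan_theta_pos.
    pose proof (b_ge_half b heven hnoninc (red x) ltac:(pose proof (red_bounds x); lra)).
    unfold launch_point, periodize.
    enough (0 < (b (red x) - y0) / tan theta) by lra.
    apply Rdiv_lt_0_compat; lra. }
  destruct (expanding_preimage _ _ expansion_rate_pos launch_point_expanding x x
              launch_point_continuous (Rlt_le _ _ Hlaunch)) as [z [Hxz Hz]].
  assert (Hxz' : x < z) by (destruct (Req_dec x z) as [<- |]; lra).
  set (t := (z - x) / cos theta).
  assert (Ht : x + t * cos theta = z) by (unfold t; field; lra).
  exists t. split; [| split].
  - apply Rdiv_lt_0_compat; lra.
  - apply hits_upper_iff. rewrite Ht. exact Hz.
  - intros s Hs Hhit. apply hits_upper_iff in Hhit. rewrite <- Hz in Hhit.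
    apply (expanding_inj _ _ expansion_rate_pos launch_point_expanding) in Hhit.
    assert (s * cos theta < t * cos theta) by (apply Rmult_lt_compat_r; lra).
    lra.
Qed.

Lemma launch_point_collision x :
  launch_point b theta y0 (collision_abscissa b theta y0 x) = x.
Proof.
  destruct (epsilon_spec (inhabits 0) _ (first_collision_time_exists x)) as [_ [Hhit _]].
  apply hits_upper_iff in Hhit. exact Hhit.
Qed.

Lemma return_lift_eq x :
  return_lift b theta y0 x = 2 * collision_abscissa b theta y0 x - x + 2 * y0 / tan theta.
Proof.
  pose proof cos_theta_pos. pose proof sin_theta_pos.
  pose proof (launch_point_collision x) as Hx. apply launch_point_eq_iff in Hx.
  unfold return_lift, x_c. fold (collision_abscissa b theta y0 x).
  change (b (red (collision_abscissa b theta y0 x)))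
    with (periodize b (collision_abscissa b theta y0 x)).
  rewrite Hx. unfold tan. field. lra.
Qed.

Lemma is_derive_launch_point X l : -1/2 < red X -> is_derive b (red X) l ->
  is_derive (launch_point b theta y0) X (1 - l / tan theta).
Proof.
  intros Hred Hb. pose proof tan_theta_pos.
  pose proof (is_derive_periodize b X l Hred Hb) as HB.
  unfold launch_point. auto_derive.
  - exists l. exact HB.
  - replace (Derive (fun Y => periodize b Y) X) with l
      by (symmetry; apply is_derive_unique; exact HB).
    field. lra.
Qed.

Lemma deriv_lt_tan_theta X l : -1/2 < red X -> is_derive b (red X) l -> l < tan theta.
Proof.
  intros Hred Hb. pose proof tan_theta_pos. pose proof tan_theta_gt.
  pose proof (expanding_deriv_ge _ _ launch_point_expanding _ _
                (is_derive_launch_point X l Hred Hb)) as Hrate.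
  assert (Hld : l * / tan theta <= d * / tan theta) by (unfold Rdiv in Hrate; lra).
  apply Rmult_le_reg_r in Hld; [lra | apply Rinv_0_lt_compat; lra].
Qed.

Lemma is_derive_return_lift x l :
  -1/2 < x_c b theta y0 x -> is_derive b (x_c b theta y0 x) l ->
  is_derive (return_lift b theta y0) x ((tan theta + l) / (tan theta - l)).
Proof.
  intros Hred Hb. pose proof tan_theta_pos.
  pose proof (deriv_lt_tan_theta _ _ Hred Hb).
  assert (HX : is_derive (collision_abscissa b theta y0) x (/ (1 - l / tan theta))).
  { apply (is_derive_expanding_inverse _ _ expansion_rate_pos launch_point_expanding).
    - exact launch_point_collision.
    - exact (is_derive_launch_point _ l Hred Hb). }
  apply is_derive_ext with
    (fun x' => 2 * collision_abscissa b theta y0 x' - x' + 2 * y0 / tan theta).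
  { intros x'. symmetry. apply return_lift_eq. }
  auto_derive.
  - exists (/ (1 - l / tan theta)). exact HX.
  - replace (Derive (fun Y => collision_abscissa b theta y0 Y) x) with (/ (1 - l / tan theta))
      by (symmetry; apply is_derive_unique; exact HX).
    field. lra.
Qed.

End FirstCollision.

Lemma sin_add_div_sin_sub a c : 0 < cos a -> 0 < cos c -> tan c < tan a ->
  sin (a + c) / sin (a - c) = (tan a + tan c) / (tan a - tan c).
Proof.
  intros Ha Hc Hac. rewrite sin_plus, sin_minus.
  replace (sin a * cos c + cos a * sin c) with (cos a * cos c * (tan a + tan c))
    by (unfold tan; field; lra).
  replace (sin a * cos c - cos a * sin c) with (cos a * cos c * (tan a - tan c))
    by (unfold tan; field; lra).
  field. split; lra.
Qed.

Theorem lemma2p1 (b : R -> R) (d theta y0 : R)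
  (hpc : piecewise_C1 b (-1/2) (1/2))
  (hconc : concave_on b (-1/2) (1/2))
  (heven : forall x, -1/2 <= x <= 1/2 -> b (- x) = b x)
  (hnoninc : forall x y, 0 <= x -> x <= y -> y <= 1/2 -> b y <= b x)
  (hpos : forall x, -1/2 <= x <= 1/2 -> 0 < b x)
  (* d = b'(-1/2) (right derivative), so alpha_M = atan d *)
  (hd : filterlim (fun h => (b (-1/2 + h) - b (-1/2)) / h) (at_right 0) (locally d))
  (htheta : atan d < theta < PI / 2)
  (hy0 : - b (1/2) < y0 < b (1/2))
  (x : R) (hx : -1/2 <= x <= 1/2)
  (hxc : -1/2 < x_c b theta y0 x)
  (hdiff : ex_derive b (x_c b theta y0 x)) :
  is_derive (return_lift b theta y0) x
    (sin (theta + alpha b (x_c b theta y0 x)) /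
     sin (theta - alpha b (x_c b theta y0 x))).
Proof.
  assert (hy0' : y0 < b (1/2)) by lra.
  pose proof (Derive_correct _ _ hdiff) as Hb.
  set (l := Derive b (x_c b theta y0 x)) in *.
  unfold alpha. fold l.
  rewrite sin_add_div_sin_sub, tan_atan.
  - exact (is_derive_return_lift b d theta y0 hconc heven hnoninc hd htheta hy0' x l hxc Hb).
  - exact (cos_theta_pos d theta htheta).
  - pose proof (atan_bound l). apply cos_gt_0; lra.
  - rewrite tan_atan.
    exact (deriv_lt_tan_theta b d theta y0 hconc heven hnoninc hd htheta _ l hxc Hb).
Qed.
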